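(* Let $p$ be a prime and $n,d$ positive integers. For any $k\geq\lceil\frac{d+1}{p-1}\rceil$, if $h:\mathbb{F}_p^k\to\mathbb{F}_p$ satisfies $\deg(h)=k(p-1)-(d+1)$, then $h$ is a local characterization for $\mathrm{RM}[n,p,d]$, i.e. $\mathrm{RM}[n,p,d]=\mathcal{F}_n(h)$.
   Context: Functions $\mathbb{F}_q^m\to\mathbb{F}_q$ are identified with their unique polynomial representations with individual degrees in $\{0,\dots,q-1\}$; the degree is the maximal total degree of a monomial with nonzero coefficient. $\mathrm{RM}[n,q,d]$ is the set of functions $\mathbb{F}_q^n\to\mathbb{F}_q$ of degree at most $d$. For $f,g:\mathbb{F}_q^k\to\mathbb{F}_q$, $\langle f,g\rangle=\sum_{\alpha\in\mathbb{F}_q^k}f(\alpha)g(\alpha)\in\mathbb{F}_q$. Let $\mathcal{T}_{n,k}$ be the set of affine maps $T:\mathbb{F}_q^k\to\mathbb{F}_q^n$, and for $f:\mathbb{F}_q^n\to\mathbb{F}_q$ let $f\circ T:\mathbb{F}_q^k\to\mathbb{F}_q$, $x\mapsto f(T(x))$. For $h:\mathbb{F}_q^k\to\mathbb{F}_q$, $\mathcal{F}_n(h)=\{f:\mathbb{F}_q^n\to\mathbb{F}_q : \langle f\circ T,h\rangle=0 \text{ for all } T\in\mathcal{T}_{n,k}\}$, and $h$ is called a local characterization for $\mathcal{F}_n(h)$. *)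

From HB Require Import structures.
From mathcomp Require Import all_boot all_order all_algebra.
Set Implicit Arguments. Unset Strict Implicit. Unset Printing Implicit Defensive.
Import GRing.Theory.
Local Open Scope ring_scope.

Definition pt (F : Type) (m : nat) := {ffun 'I_m -> F}.

Definition expo (q m : nat) := {ffun 'I_m -> 'I_q}.

Definition tdeg (q m : nat) (e : expo q m) : nat := (\sum_(i < m) (e i : nat))%N.

Definition monom (F : comNzRingType) (q m : nat) (e : expo q m) (x : pt F m) : F :=
  \prod_(i < m) x i ^+ (e i : nat).

Definition represents (F : finComNzRingType) (m : nat)
    (c : expo #|F| m -> F) (f : pt F m -> F) : Prop :=
  forall x : pt F m, f x = \sum_(e : expo #|F| m) c e * monom e x.

Definition deg_le (F : finComNzRingType) (m : nat) (f : pt F m -> F) (D : nat) : Prop :=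
  exists c, represents c f /\ forall e, c e != 0 -> (tdeg e <= D)%N.

(* deg f = D (the representation being unique, this is the paper's notion). *)
Definition has_deg (F : finComNzRingType) (m : nat) (f : pt F m -> F) (D : nat) : Prop :=
  exists c, represents c f /\ (forall e, c e != 0 -> (tdeg e <= D)%N)
            /\ exists e, c e != 0 /\ tdeg e = D.

Definition RM (F : finComNzRingType) (n d : nat) (f : pt F n -> F) : Prop :=
  deg_le f d.

Definition inner (F : finComNzRingType) (k : nat) (f g : pt F k -> F) : F :=
  \sum_(a : pt F k) f a * g a.

Definition affine_app (F : comNzRingType) (n k : nat) (A : 'M[F]_(n, k)) (b : pt F n)
    (x : pt F k) : pt F n :=
  [ffun j => \sum_(i < k) A j i * x i + b j].

Definition in_Fn (F : finComNzRingType) (n k : nat) (h : pt F k -> F) (f : pt F n -> F) : Prop :=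
  forall (A : 'M[F]_(n, k)) (b : pt F n), inner (fun x => f (affine_app A b x)) h = 0.

Definition ceil_div (a b : nat) : nat := ((a + b - 1) %/ b)%N.

From mathcomp Require Import all_boot all_order all_algebra finfield.
From mathcomp Require Import zify ring.
Set Implicit Arguments. Unset Strict Implicit. Unset Printing Implicit Defensive.
Import GRing.Theory.
Local Open Scope ring_scope.

(* Write q = #|F|.  If deg f <= d and T is affine, then (f o T) h has degree
   < k(q-1), hence sums to 0 over F^k: each of its monomials has an exponent
   j < q-1, and sum_t t^j = 0.  So RM[n,q,d] is contained in F_n(h).

   Conversely, F_n(h) is a linear space stable under affine substitutions.
   Substituting x |-> t x and interpolating in t shows that each monomial x^u
   of f in F_n(h) lies in F_n(h).  Substituting x_l |-> x_l + t (b + c x_l')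
   and keeping the coefficient of t, namely u_l x^(u - e_l) (b + c x_l') where
   u_l is invertible in the prime field F, one lowers an exponent or moves one
   unit of it to another variable.  If deg f > d, this turns x^u, seen on
   F^(n+k), into x^(q-1-a) on the last k variables, where x^a is a monomial of
   h of top degree k(q-1)-(d+1).  But <x^(q-1-a), h> is (-1)^k times the
   coefficient of x^a in h, as every other monomial of h leaves an exponent of
   the product below q-1; so it is nonzero. *)

Lemma eq_of_leq_sum (I : finType) (u w : I -> nat) :
  (forall i, u i <= w i)%N -> (\sum_i w i <= \sum_i u i)%N -> u =1 w.
Proof.
move=> le_uw le_sum i; have [_] := leqif_sum (fun i (_ : predT i) => leqif_eq (le_uw i)).
by rewrite eqn_leq le_sum leq_sum // => /esym/forall_inP/(_ i isT)/eqP.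
Qed.

Lemma sum_nat_ltn (I : finType) (f g : I -> nat) (l : I) :
  (forall i, f i <= g i)%N -> (f l < g l)%N -> (\sum_i f i < \sum_i g i)%N.
Proof.
move=> le_fg lt_fgl; rewrite (bigD1 l) //= [X in (_ < X)%N](bigD1 l) //=.
by rewrite -addSn leq_add ?leq_sum.
Qed.

Lemma sum_nat_delta (I : finType) (l : I) : (\sum_i (i == l) = 1)%N.
Proof. by rewrite (bigD1 l) //= eqxx big1 // => i /negbTE ->. Qed.

Lemma sum_sub_delta (I : finType) (u : I -> nat) (l : I) :
  (0 < u l)%N -> (\sum_i (u i - (i == l)) = \sum_i u i - 1)%N.
Proof.
move=> ul_gt0; rewrite sumnB ?sum_nat_delta // => i _.
by have [-> | _] := eqVneq i l.
Qed.

Lemma exprD_scale_widen (R : comNzRingType) (a b t : R) (n N : nat) : (n < N)%N ->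
  (a + t * b) ^+ n = \sum_(j < N) t ^+ j * ((a ^+ (n - j) * b ^+ j) *+ 'C(n, j)).
Proof.
move=> lt_nN; rewrite exprDn.
rewrite (big_ord_widen N (fun j => (a ^+ (n - j) * (t * b) ^+ j) *+ 'C(n, j)) lt_nN).
rewrite big_mkcond /=; apply: eq_bigr => j _; case: ifP => [_|].
  by rewrite exprMn mulrnAr mulrCA.
by rewrite ltnS => /negbT; rewrite -ltnNge => /bin_small ->; rewrite !mulr0n mulr0.
Qed.

Lemma ceil_div_le (a b k : nat) : (0 < b)%N -> (ceil_div a b <= k)%N -> (a <= k * b)%N.
Proof.
move=> b_gt0 le_ak; have := ltn_ceil (a + b - 1) b_gt0; rewrite -/(ceil_div a b) => lt_ceil.
have : ((ceil_div a b).+1 * b <= k.+1 * b)%N by rewrite leq_mul2r ltnS le_ak orbT.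
move: lt_ceil; rewrite !mulSn; lia.
Qed.

Section FiniteField.
Variable F : finFieldType.
Local Notation q := #|F|.

Lemma card_gt1 : (1 < q)%N. Proof. exact: finNzRing_gt1. Qed.

Lemma card_predS : q.-1.+1 = q. Proof. by rewrite prednK // ltnW // card_gt1. Qed.

Lemma card_pred_gt0 : (0 < q.-1)%N. Proof. by rewrite -ltnS card_predS card_gt1. Qed.

Lemma ord_leq_card_pred (j : 'I_q) : (j <= q.-1)%N.
Proof. by rewrite -ltnS card_predS. Qed.

Lemma natr_card : q%:R = 0 :> F.
Proof.
have : \sum_(t : F) t = \sum_(t : F) (t + 1) := reindex_inj (addIr 1).
by rewrite big_split sumr_const /= -[LHS]addr0 => /addrI <-.
Qed.

Lemma expf_card_pred (t : F) : t != 0 -> t ^+ q.-1 = 1.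
Proof.
by move=> tnz; apply: (mulfI tnz); rewrite mulr1 -exprS card_predS expf_card.
Qed.

Definition power_sum j := \sum_(t : F) t ^+ j.

(* For 0 < j < q-1 some a has a^j <> 1, since X^j - 1 has at most j roots;
   substituting t |-> a t then multiplies the sum by a^j. *)
Lemma power_sum_small j : (j < q.-1)%N -> power_sum j = 0.
Proof.
case: j => [_|j ltjq].
  by rewrite /power_sum (eq_bigr _ (fun _ _ => expr0 _)) sumr_const natr_card.
have [a anz aj] : exists2 a : F, a != 0 & a ^+ j.+1 != 1.
  apply/exists_inP; apply: contraTT ltjq => /exists_inPn all1; rewrite -leqNgt.
  rewrite -[q.-1](cardC1 (0 : F)) cardE; apply: max_unity_roots; rewrite ?enum_uniq //.
  by apply/allP => t; rewrite mem_enum unity_rootE => /all1/negbNE.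
have : power_sum j.+1 = a ^+ j.+1 * power_sum j.+1.
  rewrite /power_sum mulr_sumr [LHS](reindex_inj (mulfI anz)).
  by apply: eq_bigr => t _; rewrite exprMn.
move/eqP; rewrite -subr_eq0 -{1}[power_sum _]mul1r -mulrBl mulf_eq0 subr_eq0.
by rewrite eq_sym (negbTE aj) => /eqP.
Qed.

Lemma power_sum_pred : power_sum q.-1 = -1.
Proof.
have := natr_card; rewrite -sumr_const (bigD1 0) //= => /eqP; rewrite addr_eq0 => /eqP E.
rewrite /power_sum (bigD1 0) //= expr0n (negbTE (lt0n_neq0 card_pred_gt0)) add0r E opprK.
by apply: eq_bigr => t tnz; rewrite expf_card_pred.
Qed.

Lemma power_sum_shift j : (0 < j)%N -> power_sum (j + q.-1) = power_sum j.
Proof.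
move=> j0; apply: eq_bigr => t _; rewrite exprD.
have [->|tnz] := eqVneq t 0; last by rewrite expf_card_pred // mulr1.
by rewrite !expr0n (negbTE (lt0n_neq0 j0)) mul0r.
Qed.

(* The reduced polynomial of the indicator of [s] is 1 - (X - s)^(q-1);
   [ind_coef m s] is its coefficient of X^m. *)
Definition ind_coef (m : nat) (s : F) :=
  if m == 0%N then 1 - s ^+ q.-1 else - s ^+ (q.-1 - m).

Lemma ind_coef_orth m m' : (m < q)%N -> (m' < q)%N ->
  \sum_(t : F) ind_coef m t * t ^+ m' = (m == m')%:R.
Proof.
rewrite -card_predS !ltnS /ind_coef => le_m le_m'.
have [-> | m_gt0] := posnP m.
  under eq_bigr => t _ do rewrite mulrBl mul1r -exprD.
  rewrite sumrB -/(power_sum m') -/(power_sum (q.-1 + m')) addnC.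
  case: m' le_m' => [|m'] _; last by rewrite power_sum_shift // subrr.
  by rewrite power_sum_pred power_sum_small ?card_pred_gt0 // sub0r opprK.
under eq_bigr => t _ do rewrite mulNr -exprD.
rewrite sumrN -/(power_sum (q.-1 - m + m')).
have [lt_mm'|lt_m'm|->] := ltngtP m m'.
- rewrite (_ : q.-1 - m + m' = m' - m + q.-1)%N; last lia.
  by rewrite power_sum_shift ?subn_gt0 // power_sum_small ?oppr0 //; lia.
- by rewrite power_sum_small ?oppr0 //; lia.
- by rewrite subnK // power_sum_pred opprK.
Qed.

Lemma ind_coef_interp (s r : F) : \sum_(m < q) ind_coef m s * r ^+ m = (s == r)%:R.
Proof.
have -> : \sum_(m < q) ind_coef m s * r ^+ m = 1 - \sum_(m < q) s ^+ (q.-1 - m) * r ^+ m.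
  rewrite -card_predS !big_ord_recl /ind_coef /= expr0 !mulr1 subn0.
  rewrite opprD addrA -sumrN; congr (_ + _); apply: eq_bigr => i _ /=; by rewrite mulNr.
have [->|neq] := eqVneq s r.
  under eq_bigr => i _ do rewrite -exprD (subnK (ord_leq_card_pred _)).
  by rewrite sumr_const card_ord -[_ *+ q]mulr_natr natr_card mulr0 subr0.
have := subrXX s r q; rewrite !expf_card -{1}[s - r]mulr1 => /mulfI <-; first by rewrite subrr.
by rewrite subr_eq0.
Qed.

Lemma prod_natr_eq (m : nat) (T : eqType) (u v : 'I_m -> T) :
  \prod_(i < m) ((u i == v i)%:R : F) = [forall i, u i == v i]%:R.
Proof.
case: forallP => [uv | /forallP/forallPn [i /negbTE uvi]].
  by rewrite big1 // => i _; rewrite uv.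
by rewrite (bigD1 i) //= uvi mul0r.
Qed.

Definition ind_coefm (m : nat) (e : expo q m) (x : pt F m) :=
  \prod_(i < m) ind_coef (e i) (x i).

Lemma ind_coefm_orth (m : nat) (e e' : expo q m) :
  \sum_(x : pt F m) ind_coefm e x * monom e' x = (e == e')%:R.
Proof.
transitivity (\prod_(i < m) \sum_(t : F) ind_coef (e i) t * t ^+ e' i).
  by rewrite bigA_distr_bigA; apply: eq_bigr => x _; rewrite -big_split.
under eq_bigr => i _ do rewrite ind_coef_orth //.
rewrite prod_natr_eq; congr (nat_of_bool _)%:R.
by apply/forallP/eqP => [eqe|-> //]; apply/ffunP => i; apply/val_inj/eqP/eqe.
Qed.

Lemma ind_coefm_interp (m : nat) (x y : pt F m) :
  \sum_(e : expo q m) ind_coefm e x * monom e y = (x == y)%:R.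
Proof.
transitivity (\prod_(i < m) \sum_(j < q) ind_coef j (x i) * y i ^+ j).
  by rewrite bigA_distr_bigA; apply: eq_bigr => e _; rewrite -big_split.
under eq_bigr => i _ do rewrite ind_coef_interp.
rewrite prod_natr_eq; congr (nat_of_bool _)%:R.
by apply/forallP/eqP => [eqx|-> //]; apply/ffunP => i; apply/eqP/eqx.
Qed.

Definition rm_coef (m : nat) (f : pt F m -> F) (e : expo q m) :=
  \sum_(x : pt F m) f x * ind_coefm e x.

Lemma represents_rm_coef (m : nat) (f : pt F m -> F) : represents (rm_coef f) f.
Proof.
move=> y; have -> : \sum_e rm_coef f e * monom e y = \sum_x f x * (x == y)%:R.
  under eq_bigr do rewrite mulr_suml; rewrite exchange_big; apply: eq_bigr => x _.
  by rewrite -ind_coefm_interp mulr_sumr; apply: eq_bigr => e _; rewrite mulrA.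
by rewrite (bigD1 y) //= eqxx mulr1 big1 ?addr0 // => x /negbTE ->; rewrite mulr0.
Qed.

End FiniteField.

Section Monomials.
Variable F : finFieldType.
Local Notation q := #|F|.

Definition monomial (m : nat) (u : 'I_m -> nat) (x : pt F m) : F := \prod_(i < m) x i ^+ u i.

Lemma monomialD (m : nat) (u v : 'I_m -> nat) (x : pt F m) :
  monomial (fun i => u i + v i)%N x = monomial u x * monomial v x.
Proof. by rewrite /monomial -big_split; apply: eq_bigr => i _; rewrite exprD. Qed.

Lemma monomial_delta (m : nat) (l : 'I_m) (x : pt F m) :
  monomial (fun i => (i == l) : nat) x = x l.
Proof.
by rewrite /monomial (bigD1 l) //= eqxx expr1 big1 ?mulr1 // => i /negbTE ->; rewrite expr0.
Qed.

Lemma sum_monomial (m : nat) (u : 'I_m -> nat) :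
  \sum_(x : pt F m) monomial u x = \prod_(i < m) power_sum F (u i).
Proof. by rewrite /power_sum bigA_distr_bigA. Qed.

Lemma sum_monomial_small (m : nat) (u : 'I_m -> nat) :
  (\sum_i u i < m * q.-1)%N -> \sum_(x : pt F m) monomial u x = 0.
Proof.
move=> small; rewrite sum_monomial.
have [i ui_small] : exists i, (u i < q.-1)%N.
  apply/existsP; apply: contraTT small => /existsPn big; rewrite -leqNgt.
  have : (\sum_(i < m) q.-1 <= \sum_i u i)%N by apply: leq_sum => i _; rewrite leqNgt big.
  by rewrite sum_nat_const card_ord.
by rewrite (bigD1 i) //= power_sum_small // mul0r.
Qed.

(* The only consequence of [deg g <= D] that the inclusion RM[n,q,d] <= F_n(h)
   needs. *)
Definition orth_low (m D : nat) (g : pt F m -> F) :=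
  forall c : 'I_m -> nat, (\sum_i c i + D < m * q.-1)%N ->
  \sum_(x : pt F m) g x * monomial c x = 0.

Lemma eq_orth_low (m D : nat) (g g' : pt F m -> F) :
  g =1 g' -> orth_low D g -> orth_low D g'.
Proof. by move=> eqg low c small; under eq_bigr do rewrite -eqg; apply: low. Qed.

Lemma orth_low_le (m D D' : nat) (g : pt F m -> F) :
  (D <= D')%N -> orth_low D g -> orth_low D' g.
Proof.
by move=> leDD' low c small; apply: low; rewrite (leq_ltn_trans _ small) ?leq_add2l.
Qed.

Lemma orth_low_lin (m D : nat) (I : finType) (a : I -> F) (G : I -> pt F m -> F) :
  (forall i, a i != 0 -> orth_low D (G i)) -> orth_low D (fun x => \sum_i a i * G i x).
Proof.
move=> low c small; under eq_bigr do rewrite mulr_suml; rewrite exchange_big big1 // => i _.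
under eq_bigr do rewrite -mulrA; rewrite -mulr_sumr.
by have [-> | /low ->] := eqVneq (a i) 0; rewrite ?mul0r ?mulr0.
Qed.

Lemma orth_low_mul_affine (m D : nat) (a : 'I_m -> F) (b : F) (g : pt F m -> F) :
  orth_low D g -> orth_low D.+1 (fun x => (\sum_i a i * x i + b) * g x).
Proof.
move=> low c small.
under eq_bigr do rewrite mulrDl mulr_suml mulrDl mulr_suml.
rewrite big_split /= exchange_big /= big1 => [|i _].
  by under eq_bigr do rewrite -!mulrA; rewrite add0r -mulr_sumr low ?mulr0 //; lia.
under eq_bigr do rewrite -(monomial_delta i) -!mulrA [monomial _ _ * _]mulrCA -monomialD.
by rewrite -mulr_sumr low ?mulr0 // big_split /= sum_nat_delta add1n addSnnS.
Qed.

Lemma orth_low_mul_affine_pow (m D n : nat) (a : 'I_m -> F) (b : F) (g : pt F m -> F) :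
  orth_low D g -> orth_low (D + n) (fun x => (\sum_i a i * x i + b) ^+ n * g x).
Proof.
move=> low; elim: n => [|n IH].
  by rewrite addn0; apply: eq_orth_low low => x; rewrite mul1r.
by rewrite addnS; apply: eq_orth_low (orth_low_mul_affine a b IH) => x; rewrite exprS mulrA.
Qed.

Lemma orth_low_monomial_affine (m n : nat) (A : 'M[F]_(n, m)) (b : pt F n)
    (e : 'I_n -> nat) :
  orth_low (\sum_j e j) (fun x => monomial e (affine_app A b x)).
Proof.
rewrite /monomial; elim: (index_enum _) => [|j s IH].
  move=> c; rewrite big_nil addn0 => small.
  by under eq_bigr do rewrite big_nil mul1r; apply: sum_monomial_small.
rewrite big_cons addnC.
apply: eq_orth_low (orth_low_mul_affine_pow (n := e j) (A j) (b j) IH) => x.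
by rewrite big_cons ffunE.
Qed.

Lemma orth_low_comp (m n d : nat) (f : pt F n -> F) (A : 'M[F]_(n, m)) (b : pt F n) :
  deg_le f d -> orth_low d (fun x => f (affine_app A b x)).
Proof.
case=> c [rc hc]; apply: eq_orth_low (fun x => esym (rc _)) _.
by apply: orth_low_lin => e /hc; move/orth_low_le; apply; apply: orth_low_monomial_affine.
Qed.

Lemma in_Fn_of_deg_le (k n d L : nat) (h : pt F k -> F) (f : pt F n -> F) :
  (L + d < k * q.-1)%N -> deg_le h L -> deg_le f d -> in_Fn h f.
Proof.
move=> small [c [rc hc]] fd A b; have low := orth_low_comp A b fd.
rewrite /inner; under eq_bigr => x _ do rewrite rc mulr_sumr.
rewrite exchange_big big1 // => e _.
have [-> | /hc tdeg_e] := eqVneq (c e) 0.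
  by rewrite big1 // => x _; rewrite mul0r mulr0.
under eq_bigr do rewrite mulrCA; rewrite -mulr_sumr low ?mulr0 //.
by rewrite (leq_ltn_trans _ small) // leq_add2r.
Qed.

Definition cat_exp (n m : nat) (u : 'I_n -> nat) (v : 'I_m -> nat) (i : 'I_(n + m)) :
    nat :=
  match split i with inl j => u j | inr j => v j end.

Lemma sum_cat_exp (n m : nat) (u : 'I_n -> nat) (v : 'I_m -> nat) :
  (\sum_i cat_exp u v i = \sum_i u i + \sum_i v i)%N.
Proof.
rewrite big_split_ord /cat_exp; congr (_ + _)%N; apply: eq_bigr => j _.
  by rewrite (unsplitK (inl _ j)).
by rewrite (unsplitK (inr _ j)).
Qed.

Lemma monomial_cat_exp (n m : nat) (u : 'I_n -> nat) (v : 'I_m -> nat)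
    (x : pt F (n + m)) :
  monomial (cat_exp u v) x =
  monomial u [ffun j => x (lshift m j)] * monomial v [ffun j => x (rshift n j)].
Proof.
rewrite /monomial big_split_ord /cat_exp; congr (_ * _); apply: eq_bigr => j _.
  by rewrite (unsplitK (inl _ j)) ffunE.
by rewrite (unsplitK (inr _ j)) ffunE.
Qed.

Lemma monomial0 (m : nat) (x : pt F m) : monomial (fun _ => 0%N) x = 1.
Proof. by rewrite /monomial big1. Qed.

Lemma inner_monomial_compl_top (k : nat) (h : pt F k -> F) (c : expo q k -> F)
    (a : expo q k) :
  represents c h -> (forall e, c e != 0 -> (tdeg e <= tdeg a)%N) -> c a != 0 ->
  inner (monomial (fun i => q.-1 - a i)%N) h != 0.
Proof.
move=> rc top ca; rewrite /inner; under eq_bigr do rewrite rc mulr_sumr.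
rewrite exchange_big /=; under eq_bigr => e _ do
  (under eq_bigr do rewrite mulrCA -monomialD; rewrite -mulr_sumr sum_monomial).
rewrite (bigD1 a) //= [X in _ + X]big1 ?addr0 => [|e ea].
  under eq_bigr do rewrite (subnK (ord_leq_card_pred _)).
  by rewrite power_sum_pred prodr_const mulf_eq0 negb_or ca expf_neq0 // oppr_eq0 oner_neq0.
have [-> | /top le_ea] := eqVneq (c e) 0; first by rewrite mul0r.
have [i lt_ea] : exists i : 'I_k, (e i < a i)%N.
  apply/existsP; apply: contraNT ea => /existsPn le_ae; apply/eqP/ffunP => i; apply/val_inj.
  by apply: esym (eq_of_leq_sum _ le_ea i) => j; rewrite leqNgt le_ae.
rewrite (bigD1 i) //= power_sum_small ?mul0r ?mulr0 //.
by rewrite -[X in (_ < X)%N](subnK (ord_leq_card_pred (a i))) ltn_add2l.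
Qed.

End Monomials.

Definition subst_mx {R : nzRingType} (m m' : nat) (s : 'I_m -> option 'I_m') :
    'M[R]_(m, m') :=
  \matrix_(j, i) (s j == Some i)%:R.

Section AffineMaps.
Variable R : comNzRingType.

Lemma affine_app_comp (k m m' : nat) (A' : 'M[R]_(m, m')) (b' : pt R m)
    (A : 'M[R]_(m', k)) (b : pt R m') (x : pt R k) :
  affine_app A' b' (affine_app A b x) =
  affine_app (A' *m A) [ffun j => \sum_i A' j i * b i + b' j] x.
Proof.
apply/ffunP => j; rewrite !ffunE.
under eq_bigr => i _ do rewrite ffunE mulrDr.
rewrite big_split /= addrA; congr (_ + _ + _).
under eq_bigr => i _ do rewrite big_distrr.
rewrite exchange_big /=; apply: eq_bigr => l _; rewrite mxE big_distrl /=.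
by apply: eq_bigr => i _; rewrite mulrA.
Qed.

Lemma affine_app_diag (m : nat) (t y : pt R m) :
  affine_app (diag_mx (\row_i t i)) 0 y = [ffun j => t j * y j].
Proof.
apply/ffunP => j; rewrite !ffunE addr0 (bigD1 j) //= !mxE eqxx big1 ?addr0 // => i ij.
by rewrite !mxE eq_sym (negbTE ij) mul0r.
Qed.

Lemma affine_app_transvection (m : nat) (l l' : 'I_m) (c b : R) (x : pt R m) :
  affine_app (1%:M + c *: delta_mx l l') [ffun i => (l == i)%:R * b] x =
  [ffun i => x i + (l == i)%:R * (c * x l' + b)].
Proof.
apply/ffunP => j; rewrite !ffunE; under eq_bigr do rewrite !mxE mulrDl.
rewrite big_split /= (bigD1 j) //= eqxx mul1r big1 ?addr0 => [|i /negbTE ji]; last first.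
  by rewrite eq_sym ji mul0r.
rewrite -addrA; congr (_ + _); have [jl | _] := eqVneq j l.
  subst j; rewrite (bigD1 l') //= !eqxx /= mulr1n mulr1 !mul1r big1 ?addr0 // => i /negbTE il'.
  by rewrite il' mulr0 mul0r.
by rewrite /= mulr0n !mul0r addr0 big1 // => i _; rewrite /= mulr0 mul0r.
Qed.

Lemma affine_app_subst (m m' : nat) (s : 'I_m -> option 'I_m') (x : pt R m') :
  affine_app (subst_mx s) 0 x = [ffun j => oapp x 0 (s j)].
Proof.
apply/ffunP => j; rewrite !ffunE addr0; under eq_bigr do rewrite mxE.
case: (s j) => [i|] /=; last by rewrite big1 // => i _; rewrite mul0r.
rewrite (bigD1 i) //= eqxx mul1r big1 ?addr0 // => i' /negbTE i'i.
by rewrite -[Some i == _]/(i == i') eq_sym i'i mul0r.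
Qed.

End AffineMaps.

Section LocalCharacterization.
Variables (F : finFieldType) (k : nat) (h : pt F k -> F).
Local Notation q := #|F|.

Lemma eq_in_Fn (m : nat) (g g' : pt F m -> F) : g =1 g' -> in_Fn h g -> in_Fn h g'.
Proof. by move=> eqg hg A b; rewrite -(hg A b) /inner; apply: eq_bigr => x _; rewrite eqg. Qed.

Lemma in_Fn_lin (m : nat) (I : finType) (a : I -> F) (G : I -> pt F m -> F) :
  (forall i, in_Fn h (G i)) -> in_Fn h (fun x => \sum_i a i * G i x).
Proof.
move=> hG A b; rewrite /inner; under eq_bigr do rewrite mulr_suml.
rewrite exchange_big big1 // => i _.
under eq_bigr do rewrite -mulrA.
by rewrite -mulr_sumr; have := hG i A b; rewrite /inner => ->; rewrite mulr0.
Qed.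

Lemma in_Fn_scale_inv (m : nat) (c : F) (g : pt F m -> F) :
  c != 0 -> in_Fn h (fun x => c * g x) -> in_Fn h g.
Proof.
move=> cnz hcg A b; apply/eqP; have /eqP := hcg A b.
by rewrite /inner; under eq_bigr do rewrite -mulrA; rewrite -mulr_sumr mulf_eq0 (negbTE cnz).
Qed.

Lemma in_Fn_comp (m m' : nat) (g : pt F m -> F) (A' : 'M[F]_(m, m')) (b' : pt F m) :
  in_Fn h g -> in_Fn h (fun x => g (affine_app A' b' x)).
Proof. by move=> hg A b; rewrite /inner; under eq_bigr do rewrite affine_app_comp; apply: hg. Qed.

Lemma in_Fn_dual (m : nat) (I T : finType) (phi psi : I -> T -> F) (G : I -> pt F m -> F) :
  (forall i j, \sum_t psi i t * phi j t = (i == j)%:R) ->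
  (forall t, in_Fn h (fun x => \sum_j phi j t * G j x)) -> forall i, in_Fn h (G i).
Proof.
move=> dual hG i; apply: eq_in_Fn (in_Fn_lin (psi i) hG) => x.
under eq_bigr do rewrite mulr_sumr; rewrite exchange_big /=.
under eq_bigr => j _ do (under eq_bigr do rewrite mulrA; rewrite -mulr_suml dual).
by rewrite (bigD1 i) //= eqxx mul1r big1 ?addr0 // => j /negbTE ji; rewrite eq_sym ji mul0r.
Qed.

Lemma in_Fn_poly_coef (m : nat) (G : 'I_q -> pt F m -> F) :
  (forall t : F, in_Fn h (fun x => \sum_(j < q) t ^+ j * G j x)) -> forall j, in_Fn h (G j).
Proof.
have dual (i j : 'I_q) : \sum_(t : F) ind_coef i t * t ^+ j = (i == j)%:R.
  exact: ind_coef_orth.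
exact: in_Fn_dual dual.
Qed.

Lemma in_Fn_monom (m : nat) (f : pt F m -> F) (c : expo q m -> F) :
  represents c f -> in_Fn h f -> forall e, in_Fn h (fun x => c e * monom e x).
Proof.
move=> rc hf; apply: (in_Fn_dual (G := fun e x => c e * monom e x) (@ind_coefm_orth F m)) => t.
apply: eq_in_Fn (in_Fn_comp (diag_mx (\row_i t i)) 0 hf) => x.
rewrite affine_app_diag rc; apply: eq_bigr => e _; rewrite mulrCA; congr (_ * _).
by rewrite /monom -big_split; apply: eq_bigr => i _; rewrite ffunE exprMn.
Qed.

Lemma in_Fn_subst (m m' : nat) (s : 'I_m -> option 'I_m') (g : pt F m -> F) :
  in_Fn h g -> in_Fn h (fun x : pt F m' => g [ffun j => oapp x 0 (s j)]).
Proof.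
move=> hg; apply: eq_in_Fn (in_Fn_comp (subst_mx s) 0 hg) => x.
by rewrite affine_app_subst.
Qed.

Lemma in_Fn_inner (g : pt F k -> F) : in_Fn h g -> inner g h = 0.
Proof.
move=> /(_ (subst_mx (@Some _)) 0); rewrite /inner.
by under eq_bigr do rewrite affine_app_subst /= ffunK.
Qed.

Lemma in_Fn_monomial_lshift (n m : nat) (u : 'I_n -> nat) :
  in_Fn h (monomial u) -> in_Fn h (monomial (cat_exp u (fun _ : 'I_m => 0%N))).
Proof.
move=> /(in_Fn_subst (fun j => Some (lshift m j))) hu.
by apply: eq_in_Fn hu => x; rewrite monomial_cat_exp monomial0 mulr1.
Qed.

Lemma in_Fn_monomial_rshift (n m : nat) (v : 'I_m -> nat) :
  in_Fn h (monomial (cat_exp (fun _ : 'I_n => 0%N) v)) -> in_Fn h (monomial v).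
Proof.
move=> /(in_Fn_subst (fun i => if split i is inr j then Some j else None)) hv.
apply: eq_in_Fn hv => x; rewrite monomial_cat_exp monomial0 mul1r; congr monomial.
by apply/ffunP => j; rewrite !ffunE (unsplitK (inr _ j)).
Qed.

End LocalCharacterization.

Section PrimeField.
Variables (F : finFieldType) (k : nat) (h : pt F k -> F).
Local Notation q := #|F|.
Hypothesis card_pchar : q \in [pchar F].

Lemma natr_lt_card_neq0 (n : nat) : (0 < n < q)%N -> n%:R != 0 :> F.
Proof. by case/andP => n0 nq; rewrite -(dvdn_pcharf card_pchar) gtnNdvd. Qed.

(* The coefficient of t in monomial u (x + t (b + c x_l') e_l), divided by u_l. *)
Lemma in_Fn_monomial_shift (m : nat) (u : 'I_m -> nat) (l l' : 'I_m) (b c : F) :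
  (0 < u l < q)%N -> in_Fn h (monomial u) ->
  in_Fn h (fun x => (b + c * x l') * monomial (fun i => u i - (i == l))%N x).
Proof.
case/andP=> ul_gt0 ul_lt_q hu.
pose T t := affine_app (1%:M + (t * c) *: delta_mx l l') [ffun i => (l == i)%:R * (t * b)].
pose rest (x : pt F m) := \prod_(i | i != l) x i ^+ u i.
pose G (j : 'I_q) (x : pt F m) := (x l ^+ (u l - j) * (b + c * x l') ^+ j) *+ 'C(u l, j) * rest x.
have monomial_T t x : monomial u (T t x) = \sum_(j < q) t ^+ j * G j x.
  rewrite /T affine_app_transvection /monomial (bigD1 l) //= ffunE eqxx mul1r.
  rewrite (eq_bigr (fun i => x i ^+ u i)) => [|i /negbTE il]; last first.
    by rewrite ffunE eq_sym il mul0r addr0.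
  rewrite (_ : t * c * x l' + t * b = t * (b + c * x l')); last by ring.
  rewrite (exprD_scale_widen _ _ _ ul_lt_q) mulr_suml.
  by apply: eq_bigr => j _; rewrite mulrA.
have hG := in_Fn_poly_coef (fun t => eq_in_Fn (monomial_T t) (in_Fn_comp _ _ hu)).
have ul_neq0 : (u l)%:R != 0 :> F by rewrite natr_lt_card_neq0 // ul_gt0.
apply: (in_Fn_scale_inv ul_neq0); apply: eq_in_Fn (hG (Ordinal (card_gt1 F))) => x.
rewrite /G bin1 subn1 expr1 /monomial [in RHS](bigD1 l) //= eqxx subn1.
rewrite (eq_bigr (fun i => x i ^+ u i)) => [|i /negbTE il]; last by rewrite il subn0.
by rewrite -/(rest x) -mulr_natl; ring.
Qed.

Lemma in_Fn_monomial_dec (m : nat) (u : 'I_m -> nat) (l : 'I_m) :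
  (0 < u l < q)%N -> in_Fn h (monomial u) -> in_Fn h (monomial (fun i => u i - (i == l))%N).
Proof.
move=> ul hu; apply: eq_in_Fn (in_Fn_monomial_shift l 1 0 ul hu) => x.
by rewrite mul0r addr0 mul1r.
Qed.

Lemma in_Fn_monomial_move (m : nat) (u : 'I_m -> nat) (l l' : 'I_m) :
  (0 < u l < q)%N -> in_Fn h (monomial u) ->
  in_Fn h (monomial (fun i => u i - (i == l) + (i == l'))%N).
Proof.
move=> ul hu; apply: eq_in_Fn (in_Fn_monomial_shift l' 0 1 ul hu) => x.
by rewrite add0r mul1r monomialD monomial_delta mulrC.
Qed.

(* Induction on the excess of u over w: one unit of it is moved to a
   coordinate where u falls short of w, or dropped if there is none. *)
Lemma in_Fn_monomial_le (m : nat) (u w : 'I_m -> nat) :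
  (forall i, u i < q)%N -> (forall i, w i < q)%N -> (\sum_i w i <= \sum_i u i)%N ->
  in_Fn h (monomial u) -> in_Fn h (monomial w).
Proof.
move=> + lt_wq; have [N] := ubnP (\sum_i (u i - w i)); elim: N u => // N IH u.
rewrite ltnS => le_excess lt_uq le_sum hu.
have [l lt_wl_ul | le_uw] := pickP (fun i => w i < u i)%N; last first.
  suff eq_uw : u =1 w by apply: eq_in_Fn hu => x; apply: eq_bigr => i _; rewrite eq_uw.
  by apply: eq_of_leq_sum le_sum => i; rewrite leqNgt le_uw.
have ul : (0 < u l < q)%N by rewrite lt_uq (leq_ltn_trans _ lt_wl_ul).
have lt_excess (v : 'I_m -> nat) :
    (forall i, v i - w i <= u i - w i)%N -> (v l < u l)%N -> (\sum_i (v i - w i) < N)%N.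
  move=> le_vu lt_vul; apply: leq_trans le_excess; apply: (sum_nat_ltn (l := l) le_vu); lia.
have [l' lt_ul'_wl' | le_wu] := pickP (fun i => u i < w i)%N.
  have l'l : (l' == l) = false by apply/eqP => eq_l'l; move: lt_ul'_wl'; rewrite eq_l'l; lia.
  apply: IH (in_Fn_monomial_move l' ul hu).
  - apply: lt_excess => [i|]; last by rewrite eqxx eq_sym l'l; lia.
    have [-> | _] := eqVneq i l; first by rewrite eq_sym l'l; lia.
    by have [-> | _] := eqVneq i l'; lia.
  - move=> i; have [-> | _] := eqVneq i l; first by rewrite eq_sym l'l; have := lt_uq l; lia.
    by have [-> | _] := eqVneq i l'; [have := lt_wq l' | have := lt_uq i]; lia.
  - have ul_gt0 : (0 < u l)%N by case/andP: ul.
    rewrite big_split /= sum_sub_delta // sum_nat_delta subnK //.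
    by rewrite (bigD1 l) //= addn_gt0 ul_gt0.
apply: IH (in_Fn_monomial_dec ul hu).
- apply: lt_excess => [i|]; last by rewrite eqxx; lia.
  by have [-> | _] := eqVneq i l; lia.
- by move=> i; have := lt_uq i; lia.
- apply: leq_sum => i _; have [-> | _] := eqVneq i l; first lia.
  by rewrite subn0 leqNgt le_wu.
Qed.

Lemma deg_le_of_in_Fn (n d L : nat) (f : pt F n -> F) :
  (k * q.-1 <= L + d.+1)%N -> has_deg h L -> in_Fn h f -> deg_le f d.
Proof.
move=> le_kL [c [rc [top [a [ca ta]]]]] hf.
exists (rm_coef f); split=> [|e ce]; first exact: represents_rm_coef.
rewrite leqNgt; apply/negP => lt_de.
have he : in_Fn h (monomial (fun i => e i : nat)).
  exact: in_Fn_scale_inv ce (in_Fn_monom (represents_rm_coef f) hf e).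
pose b i := (q.-1 - a i)%N.
have hb : in_Fn h (monomial (cat_exp (fun _ : 'I_n => 0%N) b)).
  apply: (in_Fn_monomial_le _ _ _ (in_Fn_monomial_lshift (m := k) he)) => [i|i|].
  - by rewrite /cat_exp; case: split => j //; exact: ltnW (card_gt1 F).
  - rewrite /cat_exp; case: split => j; first exact: ltnW (card_gt1 F).
    by rewrite /b (leq_ltn_trans (leq_subr _ _)) // ltn_predL (ltnW (card_gt1 F)).
  - rewrite !sum_cat_exp !big1_eq add0n addn0 /b sumnB => [|i _]; last exact: ord_leq_card_pred.
    rewrite sum_nat_const card_ord -[(\sum_i a i)%N]/(tdeg a) -[(\sum_i e i)%N]/(tdeg e).
    lia.
have top_a : forall e', c e' != 0 -> (tdeg e' <= tdeg a)%N by rewrite ta.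
have := inner_monomial_compl_top rc top_a ca.
by rewrite in_Fn_inner ?eqxx //; apply: in_Fn_monomial_rshift hb.
Qed.

End PrimeField.

Theorem lemma3p2 (p n d k : nat) (hp : prime p) (hn : (0 < n)%N) (hd : (0 < d)%N)
  (hk : (ceil_div d.+1 p.-1 <= k)%N)
  (h : pt 'F_p k -> 'F_p) (hdeg : has_deg h (k * p.-1 - d.+1)%N) :
  forall f : pt 'F_p n -> 'F_p, @RM _ n d f <-> in_Fn h f.
Proof.
(* The equivalence holds for all n and d. *)
move=> f; have le_dk : (d.+1 <= k * p.-1)%N.
  by apply: ceil_div_le hk; rewrite -subn1 subn_gt0 prime_gt1.
have card_pchar : #|'F_p| \in [pchar 'F_p] by rewrite card_Fp // pchar_Fp.
split=> [fd | hf].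
  case: hdeg => c [rc [hc _]]; apply: (in_Fn_of_deg_le (L := k * p.-1 - d.+1)) fd.
    by rewrite card_Fp // -addnS subnK.
  by exists c.
apply: (deg_le_of_in_Fn card_pchar _ hdeg hf).
by rewrite card_Fp // subnK.
Qed.
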